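(* Let $\Gamma$ be an oriented Jordan smooth curve and $\alpha:\Gamma\to\Gamma$ a homeomorphism with nonempty set $\Lambda$ of periodic points. (a) If $Y$ is finite, there is a finite decomposition $\Gamma=\big(\bigcup_i\overline{\omega_i}\big)\cup\big(\bigcup_j\overline{\gamma_j}\big)$, where $\omega_i\subset\Gamma\setminus\Phi$ and $\gamma_j\subset\Phi\setminus\Lambda$ are pairwise disjoint $\alpha_m$-invariant open arcs with endpoints in $Y$. (b) Let $f:\Gamma\to\mathbb R$ be continuous. If $Y$ is infinite and $f(\tau)>0$ for all $\tau\in Y'$, then there is a finite decomposition $\Gamma=\big(\bigcup_i\overline{\omega_i}\big)\cup\big(\bigcup_j\overline{\gamma_j}\big)\cup\big(\bigcup_k\overline{v_k}\big)$, where $\omega_i\subset\Gamma\setminus\Phi$, $\gamma_j\subset\Phi\setminus\Lambda$, $v_k\subset\Gamma$ are pairwise disjoint $\alpha_m$-invariant open arcs with endpoints in $Y$, $\overline{v_k}\cap Y'\ne\emptyset$, and $f(t)>0$ for all $t\in\overline{v_k}$ and all $k$.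
   Context: $\alpha_0=\mathrm{id}$, $\alpha_n=\alpha\circ\alpha_{n-1}$. A point $\tau$ is periodic of multiplicity $m$ if $\alpha_m(\tau)=\tau$ and $\alpha_j(\tau)\ne\tau$ for $1\le j<m$. If $\alpha$ preserves the orientation, all periodic points have a common multiplicity $m$; if $\alpha$ changes the orientation, set $m=2$. Then $\Lambda$ is the set of fixed points of $\alpha_m$. $\Phi=\overline{\{t\in\Gamma:\alpha_m(t)\ne t\}}$, $Y=\Lambda\cap\Phi$ (the boundary of $\Lambda$), $Y'$ the set of limit points of $Y$. *)

From HB Require Import structures.
From mathcomp Require Import all_boot all_order all_algebra.
From mathcomp Require Import all_classical all_reals all_analysis.
Set Implicit Arguments. Unset Strict Implicit. Unset Printing Implicit Defensive.
Import Order.TTheory GRing.Theory Num.Theory.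
Import numFieldNormedType.Exports.
Local Open Scope classical_set_scope.
Local Open Scope ring_scope.

Section Defs.
Variable R : realType.
Notation P := (R * R)%type.

Definition param (x y : R -> R) : R -> P := fun t => (x t, y t).

(* Gamma is an oriented smooth Jordan curve, given by a 1-periodic C^1
   parametrization with nowhere-vanishing derivative, injective on [0,1);
   the orientation is the one of increasing parameter. *)
Definition smooth_jordan_param (x y : R -> R) : Prop :=
  [/\ (forall t, x (t + 1) = x t /\ y (t + 1) = y t),
      (forall s t, 0 <= s < 1 -> 0 <= t < 1 -> param x y s = param x y t -> s = t),
      (forall t, derivable x t 1 /\ derivable y t 1),
      continuous (derive1 x) /\ continuous (derive1 y) &
      (forall t, (derive1 x t, derive1 y t) != (0, 0))].

Definition curve (x y : R -> R) : set P := range (param x y).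

Definition pos_cyclic (x y : R -> R) (a b c : P) : Prop :=
  exists s1 s2 s3, [/\ s1 < s2, s2 < s3 & s3 < s1 + 1] /\
    [/\ param x y s1 = a, param x y s2 = b & param x y s3 = c].

Definition homeo_on (G : set P) (alpha : P -> P) : Prop :=
  exists beta : P -> P,
    [/\ (forall t, G t -> G (alpha t)), (forall t, G t -> G (beta t)),
        (forall t, G t -> beta (alpha t) = t) & (forall t, G t -> alpha (beta t) = t)] /\
    ({within G, continuous alpha} /\ {within G, continuous beta}).

Definition preserves_orientation (x y : R -> R) (alpha : P -> P) : Prop :=
  forall a b c, pos_cyclic x y a b c ->
    pos_cyclic x y (alpha a) (alpha b) (alpha c).

(* alpha_n = iter n alpha ; tau is periodic of multiplicity n *)
Definition periodic_mult (alpha : P -> P) (n : nat) (tau : P) : Prop :=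
  (0 < n)%N /\ iter n alpha tau = tau /\
  (forall j, (0 < j < n)%N -> iter j alpha tau <> tau).

Definition periodic_points (G : set P) (alpha : P -> P) : set P :=
  [set tau | G tau /\ exists n, periodic_mult alpha n tau].

Definition is_shift_order (x y : R -> R) (alpha : P -> P) (m : nat) : Prop :=
  (preserves_orientation x y alpha ->
     exists tau, curve x y tau /\ periodic_mult alpha m tau) /\
  (~ preserves_orientation x y alpha -> m = 2%N).

Definition Lambda (G : set P) (alpha : P -> P) (m : nat) : set P :=
  [set t | G t /\ iter m alpha t = t].

Definition Phi (G : set P) (alpha : P -> P) (m : nat) : set P :=
  closure [set t | G t /\ iter m alpha t <> t].

Definition Ybd (G : set P) (alpha : P -> P) (m : nat) : set P :=
  Lambda G alpha m `&` Phi G alpha m.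

(* A is the open arc of Gamma going (in the positive direction) from a to b;
   a = b is allowed and then A = Gamma \ {a}. *)
Definition open_arc (x y : R -> R) (a b : P) (A : set P) : Prop :=
  exists s t, [/\ s < t, t <= s + 1, param x y s = a, param x y t = b &
    A = param x y @` [set u | s < u < t]].

Definition arc_ends_in (x y : R -> R) (Y : set P) (A : set P) : Prop :=
  exists a b, [/\ Y a, Y b & open_arc x y a b A].

Definition shift_invariant (h : P -> P) (A : set P) : Prop := h @` A = A.

Definition pairwise_disjoint (L : seq (set P)) : Prop :=
  forall i j, (i < size L)%N -> (j < size L)%N -> i <> j ->
    nth set0 L i `&` nth set0 L j = set0.

Definition union_closures (L : seq (set P)) : set P :=
  [set t | exists2 A, A \in L & closure A t].

End Defs.

(* Parametrize Gamma by the 1-periodic map [param x y] and pull [Y] back to the closed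
   set [Z] of parameters. A supremum argument cuts a period [s0, s0 + 1], with s0 in Z,
   into finitely many intervals with ends in Z, each either free of Z or containing a
   limit point of Z and lying where f > 0 (a neighbourhood of the limit points). By
   connectedness an arc free of Y lies in Gamma \ Phi or in Phi \ Lambda. Each arc is
   alpha_m-invariant: alpha_m fixes its ends, and a homeomorphism of Gamma fixing two
   points either preserves or swaps the two complementary arcs. A swap contradicts the
   orientation when alpha preserves it. Otherwise m = 2, and a swap would leave alpha_m
   without fixed points off the ends; then alpha permutes the ends, hence preserves or
   swaps the arcs, and alpha o alpha = alpha_m would keep each arc. *)

From HB Require Import structures.
From mathcomp Require Import all_boot all_order all_algebra.
From mathcomp Require Import all_classical all_reals all_analysis.
From mathcomp Require Import zify lra.
Import Order.TTheory GRing.Theory Num.Theory.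
Import numFieldNormedType.Exports.
Local Open Scope classical_set_scope.
Local Open Scope ring_scope.

Set Implicit Arguments. Unset Strict Implicit.

Lemma closed_eqfun (T U : topologicalType) (f g : T -> U) :
  hausdorff_space U -> continuous f -> continuous g -> closed [set u | f u = g u].
Proof.
move=> hU cf cg; apply/closure_id; apply/seteqP; split; first exact: subset_closure.
move=> u cu; apply: hU => A B fuA guB.
have fA : nbhs u (f @^-1` A) by exact: cf.
have gB : nbhs u (g @^-1` B) by exact: cg.
have [v [fgv [Av Bv]]] := cu _ (filterI fA gB).
by exists (f v); split; rewrite // fgv.
Qed.

Lemma continuous_comp_within (T U V : topologicalType) (G : set U) (g : U -> V)
  (h : T -> U) : continuous h -> (forall u, G (h u)) -> {within G, continuous g} ->
  continuous (g \o h).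
Proof.
move=> ch hG cg u; apply: cvg_comp _ ((subspace_continuousP _ _).1 cg (h u) (hG u)) => W hW.
have hWu : nbhs u (h @^-1` [set z | G z -> W z]) by apply: ch; exact: hW.
by apply: filterS hWu => v /= /(_ (hG v)).
Qed.

Lemma finite_set_limit_point (T : topologicalType) (Y : set T) (p : T) :
  accessible_space T -> finite_set Y -> ~ limit_point Y p.
Proof.
move=> hT finY lpY.
have cY : closed (Y `\` [set p]).
  exact: (accessible_finite_set_closed.1 hT _ (finite_setD _ finY)).
have /lpY [z [zp Yz []]] : nbhs p (~` (Y `\` [set p])).
  by apply: open_nbhs_nbhs; split; [exact: closed_openC | move=> /= [_]].
by split => //; exact/eqP.
Qed.

Lemma image_closure_sub (T U : topologicalType) (f : T -> U) (A : set T) :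
  continuous f -> f @` closure A `<=` closure (f @` A).
Proof.
move=> cf _ [u Au <-] B hB.
have [v [Av Bv]] := Au _ (cf u _ hB).
by exists (f v); split; first exists v.
Qed.

Section RealIntervals.
Variable R : realType.

Lemma closure_itv_oo (a b u : R) : a < b -> a <= u <= b ->
  closure [set t | a < t < b] u.
Proof.
move=> ab /andP[au ub] B /nbhs_ballP [e /= e0 hB].
have [w /andP[aw wb] uw] : exists2 w, a < w < b & `|u - w| < e.
  have [ub' | bu] := ltP u b.
  - pose q := Num.min (u + e) b.
    have [q1 q2 q3] : [/\ q <= u + e, q <= b & u < q].
      by rewrite !ge_min !lexx orbT lt_min; split => //; apply/andP; split; lra.
    exists ((u + q) / 2); first by apply/andP; split; lra.
    rewrite ler0_norm; lra.
  - pose q := Num.max (u - e) a.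
    have [q1 q2 q3] : [/\ u - e <= q, a <= q & q < u].
      by rewrite !le_max !lexx orbT gt_max; split => //; apply/andP; split; lra.
    exists ((u + q) / 2); first by apply/andP; split; lra.
    rewrite ger0_norm; lra.
by exists w; split; [apply/andP | apply: hB; rewrite -ball_normE].
Qed.

Lemma itv_oo_closed_cover (a b : R) (U V : set R) : a < b -> closed U -> closed V ->
  (forall u, a < u < b -> U u \/ V u) -> (forall u, a < u < b -> U u -> V u -> False) ->
  (forall u, a < u < b -> U u) \/ (forall u, a < u < b -> V u).
Proof.
move=> ab cU cV cover disj; pose I := [set u : R | a < u < b].
have cI : connected I.
  apply/connected_intervalP => p q /andP[? ?] /andP[? ?] z /andP[? ?].
  by rewrite /I /=; apply/andP; split; lra.
have UI : I `&` U = I `&` ~` V.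
  apply/seteqP; split => u [Iu hu]; split => //; first by move/(disj u Iu hu).
  by case: (cover u Iu).
have [Un0 | U0] := pselect (I `&` U !=set0).
- have IU : I `&` U = I.
    by apply: (cI _ Un0); [exists (~` V); [exact: closed_openC | exact: UI] | exists U].
  by left => u Iu; have [] : (I `&` U) u by rewrite IU.
- right => u Iu; case: (cover u Iu) => // Uu.
  by case: U0; exists u.
Qed.

Lemma shift_into_window (s0 t : R) : exists k : int, s0 <= t + k%:~R < s0 + 1.
Proof.
exists (- Num.floor (t - s0)).
have /andP[h1 h2] := floor_itv (t - s0).
by rewrite mulrNz; apply/andP; split; lra.
Qed.

Lemma closed_adherent (Z : set R) d : closed Z ->
  (forall e, 0 < e -> exists2 z, Z z & `|z - d| < e) -> Z d.
Proof.
move=> cZ H; rewrite (closure_id Z).1 // => B /nbhs_ballP [e e0 hB].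
have [z Zz hz] := H e e0.
by exists z; split => //; apply: hB; rewrite -ball_normE /= distrC.
Qed.

Lemma limit_pointR (Z : set R) u :
  (forall e, 0 < e -> exists z, [/\ Z z, z != u & `|z - u| < e]) -> limit_point Z u.
Proof.
move=> H B /nbhs_ballP [e e0 hB]; have [z [Zz zu hz]] := H e e0.
by exists z; split => //; apply: hB; rewrite -ball_normE /= distrC.
Qed.

End RealIntervals.

Section TamePartition.
Variable R : realType.
Variables Z Pos : set R.

(* The parameter intervals of the arcs omega, gamma (no point of [Z] inside) and
   v (a limit point of [Z], with [Pos] holding throughout) of the paper. *)
Definition tame (p : R * R) : Prop :=
  (forall t, p.1 < t < p.2 -> ~ Z t) \/
  ((forall t, p.1 <= t <= p.2 -> Pos t) /\ exists2 u, p.1 <= u <= p.2 & limit_point Z u).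

Definition tame_partition (s0 q : R) (L : seq (R * R)) : Prop :=
  [/\ forall p, p \in L -> [/\ s0 <= p.1, p.1 < p.2, p.2 <= q, Z p.1 /\ Z p.2 & tame p],
      forall p r, p \in L -> r \in L -> p != r ->
        forall t, p.1 < t < p.2 -> r.1 < t < r.2 -> False &
      forall t, s0 < t <= q -> exists2 p, p \in L & p.1 < t <= p.2].

Lemma tame_partition_cons s0 q q' L : tame_partition s0 q L -> s0 <= q -> q < q' ->
  Z q -> Z q' -> tame (q, q') -> tame_partition s0 q' ((q, q') :: L).
Proof.
move=> [hL disjL coverL] s0q qq' Zq Zq' tame_q; split.
- move=> p; rewrite in_cons => /orP[/eqP -> // | pL].
  by have [? ? ? ? ?] := hL p pL; split => //; lra.
- move=> p r; rewrite !in_cons => /orP[/eqP -> | pL] /orP[/eqP -> | rL] //=.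
  + by rewrite eqxx.
  + by move=> _ t /andP[? ?] /andP[? ?]; have [_ _ ? _ _] := hL r rL; lra.
  + by move=> _ t /andP[? ?] /andP[? ?]; have [_ _ ? _ _] := hL p pL; lra.
  + exact: disjL.
- move=> t /andP[s0t tq']; have [tq | qt] := leP t q.
  + have [|p pL hp] := coverL t; first by apply/andP.
    by exists p => //; rewrite in_cons pL orbT.
  + by exists (q, q') => /=; [rewrite mem_head | apply/andP].
Qed.

Hypothesis Zclosed : closed Z.
Hypothesis Pos_nbhs : forall u, limit_point Z u -> nbhs u Pos.

Let Pos_ball u : limit_point Z u -> exists2 d, 0 < d & forall t, `|t - u| < d -> Pos t.
Proof.
move=> /Pos_nbhs /nbhs_ballP [d d0 hd]; exists d => // t tu.
by apply: hd; rewrite -ball_normE /= distrC.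
Qed.

Lemma tame_partition_left s0 c : Z c ->
  (forall e, 0 < e -> exists q,
     [/\ c - e < q <= c, s0 <= q, Z q & exists L, tame_partition s0 q L]) ->
  exists L, tame_partition s0 c L.
Proof.
move=> Zc approx; have [// | noLc] := pselect (exists L, tame_partition s0 c L).
have approx' e : 0 < e -> exists q,
    [/\ c - e < q < c, s0 <= q, Z q & exists L, tame_partition s0 q L].
  move=> e0; have [q [/andP[q1 q2] q0 Zq hq]] := approx e e0.
  exists q; split => //; rewrite q1 lt_neqAle q2 andbT /=.
  by apply/eqP => qc; apply: noLc; rewrite -qc.
have lpc : limit_point Z c.
  apply: limit_pointR => e e0; have [q [/andP[? ?] _ Zq _]] := approx' e e0.
  by exists q; split => //; [rewrite lt_eqF | rewrite ler0_norm; lra].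
have [d d0 Pos_d] := Pos_ball lpc.
have [q [/andP[q1 q2] q0 Zq [L hL]]] := approx' d d0.
exists ((q, c) :: L); apply: tame_partition_cons => //.
right; split; last by exists c => //=; apply/andP; split; lra.
by move=> t /= /andP[? ?]; apply: Pos_d; rewrite ler0_norm; lra.
Qed.

Lemma tame_partition_right s0 c s1 L : tame_partition s0 c L -> s0 <= c -> c < s1 ->
  Z c -> Z s1 -> exists z, [/\ c < z <= s1, Z z & exists L', tame_partition s0 z L'].
Proof.
move=> hL s0c cs1 Zc Zs1.
pose D := [set z | Z z /\ c < z <= s1].
have D1 : D s1 by split => //; rewrite cs1 lexx.
have lbD : lbound D c by move=> z [_ /andP[? _]]; lra.
have hiD : has_inf D by split; [exists s1 | exists c].
pose d := inf D.
have cd : c <= d by apply: lb_le_inf => //; exists s1.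
have ds1 : d <= s1 by apply: ge_inf => //; exists c.
have [cd' | dc] := ltP c d.
- have Zd : Z d.
    apply: closed_adherent => // e e0; have [z Dz hz] := inf_adherent e0 hiD.
    have dz : d <= z by apply: ge_inf => //; exists c.
    by case: Dz => Zz _; exists z => //; rewrite ger0_norm; lra.
  exists d; split => //; first by apply/andP.
  exists ((c, d) :: L); apply: tame_partition_cons => //.
  left => t /= /andP[ct td] Zt.
  have : d <= t by apply: ge_inf; [exists c | split => //; apply/andP; split; lra].
  lra.
- have dc' : d = c by apply/eqP; rewrite eq_le dc cd.
  have lpc : limit_point Z c.
    apply: limit_pointR => e e0; have [z [Zz /andP[cz _]] hz] := inf_adherent e0 hiD.
    by exists z; split => //; [rewrite gt_eqF | rewrite -/d dc' in hz; rewrite ger0_norm; lra].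
  have [dl dl0 Pos_dl] := Pos_ball lpc.
  have [z [Zz /andP[cz zs1]] hz] := inf_adherent dl0 hiD; rewrite -/d dc' in hz.
  exists z; split => //; first by apply/andP.
  exists ((c, z) :: L); apply: tame_partition_cons => //.
  right; split; last by exists c => //=; apply/andP; split; lra.
  by move=> t /= /andP[? ?]; apply: Pos_dl; rewrite ger0_norm; lra.
Qed.

Lemma tame_partition_exists s0 s1 : Z s0 -> Z s1 -> s0 <= s1 ->
  exists L, tame_partition s0 s1 L.
Proof.
move=> Zs0 Zs1 s01.
pose T := [set q | [/\ Z q, s0 <= q <= s1 & exists L, tame_partition s0 q L]].
have T0 : T s0 by split; [| rewrite lexx | exists [::]; split => // t; lra].
have ubT : ubound T s1 by move=> q [_ /andP[_ ?]].
have hsT : has_sup T by split; [exists s0 | exists s1].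
pose c := sup T.
have s0c : s0 <= c by apply: sup_upper_bound.
have cs1 : c <= s1 by apply: ge_sup => //; exists s0.
have approx e : 0 < e -> exists q,
    [/\ c - e < q <= c, s0 <= q, Z q & exists L, tame_partition s0 q L].
  move=> e0; have [q Tq cq] := sup_adherent e0 hsT.
  have qc : q <= c by apply: sup_upper_bound.
  by case: Tq => Zq /andP[q0 _] hq; exists q; split => //; apply/andP.
have Zc : Z c.
  apply: closed_adherent => // e e0; have [q [/andP[? ?] _ Zq _]] := approx e e0.
  by exists q => //; rewrite ler0_norm; lra.
have [L hL] := tame_partition_left Zc approx.
have [cs1' | s1c] := ltP c s1.
- have [z [/andP[cz zs1] Zz hz]] := tame_partition_right hL s0c cs1' Zc Zs1.
  have : z <= c by apply: sup_upper_bound => //; split => //; apply/andP; split; lra.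
  lra.
- by exists L; have -> : s1 = c by apply/eqP; rewrite eq_le s1c cs1.
Qed.

End TamePartition.

Section JordanCurve.
Variable R : realType.
Variables x y : R -> R.
Hypothesis HJ : smooth_jordan_param x y.
Local Notation F := (param x y).
Local Notation G := (curve x y).
Local Notation P := (R * R)%type.

Lemma param_continuous : continuous F.
Proof.
case: HJ => _ _ Hd _ _ t.
apply: (@cvg_pair _ _ _ _ (nbhs (x t)) (nbhs (y t))); apply: differentiable_continuous;
  apply/derivable1_diffP; [exact: (Hd t).1 | exact: (Hd t).2].
Qed.

Lemma param_periodic t : F (t + 1) = F t.
Proof. by case: HJ => H _ _ _ _; rewrite /param; case: (H t) => -> ->. Qed.

Lemma param_periodicz t (k : int) : F (t + k%:~R) = F t.
Proof.
have Fn s (n : nat) : F (s + n%:R) = F s.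
  by elim: n => [|n IH]; rewrite ?addr0 // -natr1 addrA param_periodic.
case: k => n; first exact: Fn.
by rewrite NegzE mulrNz -(Fn (t - n.+1%:R) n.+1) subrK.
Qed.

Lemma param_eq_shift s t : F s = F t -> exists k : int, s = t + k%:~R.
Proof.
move=> e; have [k1 /andP[h1 h2]] := shift_into_window 0 s.
have [k2 /andP[h3 h4]] := shift_into_window 0 t.
have : s + k1%:~R = t + k2%:~R.
  by case: HJ => _ inj _ _ _; apply: inj; rewrite ?param_periodicz //; apply/andP; lra.
by move=> e2; exists (k2 - k1); rewrite intrD mulrNz; lra.
Qed.

Lemma param_inj_window s0 s t : s0 <= s < s0 + 1 -> s0 <= t < s0 + 1 -> F s = F t -> s = t.
Proof.
move=> /andP[h1 h2] /andP[h3 h4] /param_eq_shift [k e].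
suff k0 : k = 0 by rewrite e k0 addr0.
have : k%:~R < 1%:~R :> R by rewrite -[1%:~R]/(1 : R); lra.
have : (-1)%:~R < k%:~R :> R by rewrite intrN -[1%:~R]/(1 : R); lra.
rewrite !ltr_int; lia.
Qed.

Lemma curve_param u : G (F u). Proof. by exists u. Qed.

Lemma curve_param_window s0 p : G p -> exists2 t, s0 <= t < s0 + 1 & F t = p.
Proof.
case=> t _ <-; have [k hk] := shift_into_window s0 t.
by exists (t + k%:~R) => //; rewrite param_periodicz.
Qed.

Lemma limit_point_param (Y : set P) u :
  limit_point (F @^-1` Y) u -> limit_point Y (F u).
Proof.
move=> lpY U hU.
have hFU : nbhs u (F @^-1` U) by exact: param_continuous.
have hball : nbhs u (ball u (1 / 2)) by exact: nbhsx_ballx.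
have [t [tu Yt [Ut]]] := lpY _ (filterI hFU hball).
rewrite -ball_normE /= => ut.
exists (F t); split => //; apply: contra_neq tu => /(param_inj_window (s0 := u - 1 / 2)).
by apply; apply/andP; move: ut; rewrite ltr_norml => /andP[? ?]; split; lra.
Qed.

End JordanCurve.

Section Arcs.
Variable R : realType.
Variables x y : R -> R.
Hypothesis HJ : smooth_jordan_param x y.
Local Notation F := (param x y).
Local Notation G := (curve x y).
Local Notation P := (R * R)%type.

Definition arc (a b : R) : set P := F @` [set u | a < u < b].
Definition closed_arc (a b : R) : set P := F @` [set u | a <= u <= b].

Lemma arc_sub_curve a b : arc a b `<=` G.
Proof. by move=> _ [u _ <-]; exact: curve_param. Qed.

Lemma closed_arc_closed a b : closed (closed_arc a b).
Proof.
apply: compact_closed; first exact: norm_hausdorff.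
apply: continuous_compact; first by apply: continuous_subspaceT => u; exact: param_continuous.
have -> : [set u : R | a <= u <= b] = `[a, b]%classic.
  by apply/seteqP; split => u; rewrite /= in_itv.
exact: segment_compact.
Qed.

Lemma arc_sub_closed_arc a b : arc a b `<=` closed_arc a b.
Proof. by move=> _ [u /andP[? ?] <-]; exists u => //; apply/andP; split; lra. Qed.

Lemma closure_arc_sub a b : closure (arc a b) `<=` closed_arc a b.
Proof.
rewrite [X in _ `<=` X](closure_id _).1; last exact: closed_arc_closed.
exact/closureS/arc_sub_closed_arc.
Qed.

Lemma closure_arc_param a b u : a < b -> a <= u <= b -> closure (arc a b) (F u).
Proof.
move=> ab hu; apply: (image_closure_sub (param_continuous HJ)).
by exists u => //; exact: closure_itv_oo.
Qed.

Lemma arc_shift1 a b : arc (a + 1) (b + 1) = arc a b.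
Proof.
apply/seteqP; split => _ [u /andP[? ?] <-].
- by exists (u - 1); [apply/andP; split; lra | rewrite -(param_periodic HJ) subrK].
- by exists (u + 1); [apply/andP; split; lra | rewrite param_periodic].
Qed.

Lemma closed_arc_cases a b p : closed_arc a b p -> [\/ p = F a, p = F b | arc a b p].
Proof.
case=> t /andP[t1 t2] <-.
have [-> | ta] := eqVneq t a; first exact: Or31.
have [-> | tb] := eqVneq t b; first exact: Or32.
by apply: Or33; exists t => //=; rewrite !lt_neqAle eq_sym ta tb t1 t2.
Qed.

Lemma curve_cases a b p : a < b <= a + 1 -> G p ->
  [\/ p = F a, p = F b, arc a b p | arc b (a + 1) p].
Proof.
move=> /andP[ab ba] /(curve_param_window HJ a) [t /andP[t1 t2] <-].
have [-> | ta] := eqVneq t a; first exact: Or41.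
have [-> | tb] := eqVneq t b; first exact: Or42.
have [tb' | bt] := ltP t b.
- by apply: Or43; exists t => //=; rewrite tb' andbT lt_neqAle eq_sym ta t1.
- by apply: Or44; exists t => //=; rewrite t2 andbT lt_neqAle eq_sym tb bt.
Qed.

Lemma arc_disjoint a b p : a < b <= a + 1 -> arc a b p -> arc b (a + 1) p -> False.
Proof.
move=> /andP[ab ba] [s /andP[s1 s2] <-] [t /andP[t1 t2]] ets.
have : t = s by apply: (param_inj_window HJ (s0 := a)) => //; apply/andP; split; lra.
lra.
Qed.

Lemma arc_neq_ends a b p : a < b <= a + 1 -> arc a b p -> p <> F a /\ p <> F b.
Proof.
move=> /andP[ab ba] [s /andP[s1 s2] <-].
have inj t : a <= t < a + 1 -> F s = F t -> s = t.
  by apply: (param_inj_window HJ); apply/andP; split; lra.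
split => [eq_sa | eq_sb].
- have : s = a by apply: inj eq_sa; apply/andP; split; lra.
  lra.
- have [ba' | ab1] := ltP b (a + 1).
  + have : s = b by apply: inj eq_sb; apply/andP; split; lra.
    lra.
  + have eb : b = a + 1 by apply/eqP; rewrite eq_le ba ab1.
    have : s = a by apply: inj; [apply/andP; split; lra | rewrite eq_sb eb param_periodic].
    lra.
Qed.

Lemma ends_shift1 a b : [set F b; F (a + 1)] = [set F a; F b].
Proof.
by rewrite param_periodic //; apply/seteqP; split => p [] ->; by [left | right].
Qed.

Lemma curve_setD_ends a b : a < b <= a + 1 ->
  G `\` [set F a; F b] = arc a b `|` arc b (a + 1).
Proof.
move=> hab; have /andP[ab ba] := hab; apply/seteqP; split.
- by move=> p [Gp nE]; case: (curve_cases hab Gp) => [pa|pb|?|?];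
    [case: nE; left | case: nE; right | left | right].
- move=> p [] hp.
  + have [pa pb] := arc_neq_ends hab hp.
    by split; [exact: arc_sub_curve hp | case].
  + have hba : b < a + 1 <= b + 1 by case: hp => t /andP[? ?] _; apply/andP; split; lra.
    have [pb pa] := arc_neq_ends hba hp.
    split; [exact: arc_sub_curve hp | move=> [pa' | pb']]; last exact: pb pb'.
    by apply: pa; rewrite pa' param_periodic.
Qed.

Lemma closed_arc_setD a b : closed_arc a b `\` [set F a; F b] `<=` arc a b.
Proof. by move=> p [/closed_arc_cases [pa | pb | //] nE]; case: nE; [left | right]. Qed.

Lemma arc_image_dichotomy (g : P -> P) a b : a < b <= a + 1 -> continuous (g \o F) ->
  g @` arc a b `<=` G `\` [set F a; F b] ->
  g @` arc a b `<=` arc a b \/ g @` arc a b `<=` arc b (a + 1).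
Proof.
move=> hab cg gO; have /andP[ab ba] := hab.
have cl C : closed C -> closed ((g \o F) @^-1` C).
  by move=> cC; apply: preimage_closed => // u _; exact: cg.
have gFO u : a < u < b -> (G `\` [set F a; F b]) (g (F u)).
  by move=> hu; apply: gO; exists (F u) => //; exists u.
have inA u : a < u < b -> closed_arc a b (g (F u)) -> arc a b (g (F u)).
  by move=> hu gu; apply: closed_arc_setD; split => //; case: (gFO u hu).
have inC u : a < u < b -> closed_arc b (a + 1) (g (F u)) -> arc b (a + 1) (g (F u)).
  by move=> hu gu; apply: closed_arc_setD; rewrite ends_shift1; split => //; case: (gFO u hu).
have cover u : a < u < b ->
    closed_arc a b (g (F u)) \/ closed_arc b (a + 1) (g (F u)).
  move=> hu; have := gFO u hu; rewrite curve_setD_ends // => -[] ?;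
    [left | right]; exact: arc_sub_closed_arc.
have disj u : a < u < b ->
    closed_arc a b (g (F u)) -> closed_arc b (a + 1) (g (F u)) -> False.
  by move=> hu /(inA u hu) hA /(inC u hu); exact: arc_disjoint.
have [allA | allC] := itv_oo_closed_cover ab (cl _ (closed_arc_closed (a := a) (b := b)))
  (cl _ (closed_arc_closed (a := b) (b := a + 1))) cover disj.
- by left => _ [_ [u hu <-] <-]; exact: inA (allA u hu).
- by right => _ [_ [u hu <-] <-]; exact: inC (allC u hu).
Qed.

Lemma arc_window_disjoint s0 a b c d : s0 <= a -> b <= s0 + 1 -> s0 <= c -> d <= s0 + 1 ->
  (forall t, a < t < b -> c < t < d -> False) -> arc a b `&` arc c d = set0.
Proof.
move=> s0a bs1 s0c ds1 disj; apply/seteqP; split => // _ [[u /andP[u1 u2] <-]].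
move=> [v /andP[v1 v2] Fvu].
have vu : v = u by apply: (param_inj_window HJ (s0 := s0)) => //; apply/andP; split; lra.
by apply: (disj u); apply/andP; split; lra.
Qed.

Lemma curve_sub_closures s0 (L : seq (R * R)) : (forall p, p \in L -> p.1 < p.2) ->
  (forall t, s0 < t <= s0 + 1 -> exists2 p, p \in L & p.1 < t <= p.2) ->
  G `<=` union_closures [seq arc p.1 p.2 | p <- L].
Proof.
move=> ordL coverL _ /(curve_param_window HJ s0) [t /andP[t1 t2] <-].
have [t' [/andP[t'1 t'2] <-]] : exists t', s0 < t' <= s0 + 1 /\ F t' = F t.
  have [-> | ts0] := eqVneq t s0.
    by exists (s0 + 1); rewrite param_periodic //; split => //; apply/andP; split; lra.
  by exists t; split => //; rewrite lt_neqAle eq_sym ts0 t1 ltW.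
have [p pL /andP[? ?]] := coverL t' ltac:(apply/andP; split; lra).
exists (arc p.1 p.2); first exact: map_f.
by apply: closure_arc_param; [exact: ordL | apply/andP; split; lra].
Qed.

Lemma pos_cyclic_arc a b p : a < b < a + 1 -> pos_cyclic x y (F a) p (F b) -> arc a b p.
Proof.
move=> /andP[ab ba] [s1 [s2 [s3 [[h12 h23 h31] [e1 e2 e3]]]]].
have [k ek] := param_eq_shift HJ e1.
have s3b : s3 - k%:~R = b.
  apply: (param_inj_window HJ (s0 := a)); [apply/andP; split; lra | apply/andP; split; lra |].
  by rewrite -intrN param_periodicz.
by exists (s2 - k%:~R); [apply/andP; split; lra | rewrite -intrN param_periodicz].
Qed.

End Arcs.

Section SetMaps.
Variable T : Type.
Implicit Types (G E A C : set T) (g h : T -> T).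

Lemma image_setD_eq G E g h : (forall t, G t -> G (g t)) -> (forall t, G t -> G (h t)) ->
  (forall t, G t -> g (h t) = t) -> (forall t, G t -> E (g t) <-> E t) ->
  g @` (G `\` E) = G `\` E.
Proof.
move=> gG hG hK gE; apply/seteqP; split.
- by move=> _ [t [Gt nEt] <-]; split; [exact: gG | move/(gE t Gt)].
- move=> p [Gp nEp]; exists (h p); last exact: hK.
  by split; [exact: hG | move=> /(gE _ (hG p Gp)); rewrite hK].
Qed.

Lemma image_eq_of_partition g A C : A `&` C = set0 -> g @` (A `|` C) = A `|` C ->
  g @` A `<=` A -> g @` C `<=` C -> g @` A = A.
Proof.
move=> AC0 gAC gA gC; apply/seteqP; split => // t At.
have [s [As | Cs] gst] : (g @` (A `|` C)) t by rewrite gAC; left.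
- by exists s.
- have Ct : C t by apply: gC; exists s.
  by have : (A `&` C) t by []; rewrite AC0.
Qed.

Lemma iter_in G g n t : (forall t, G t -> G (g t)) -> G t -> G (iter n g t).
Proof. by move=> gG Gt; elim: n => //= n IH; exact: gG. Qed.

Lemma iter_cancel G g h n t : (forall t, G t -> G (h t)) ->
  (forall t, G t -> g (h t) = t) -> G t -> iter n g (iter n h t) = t.
Proof.
move=> hG hK; elim: n t => //= n IH t Gt.
by rewrite -iterS iterSr hK ?IH //; exact: iter_in.
Qed.

End SetMaps.

Lemma continuous_iter_within (T U : topologicalType) (G : set U) (f : U -> U) (h : T -> U) n :
  continuous h -> (forall u, G (h u)) -> (forall t, G t -> G (f t)) ->
  {within G, continuous f} -> continuous (iter n f \o h).
Proof.
move=> ch hG fG cf; elim: n => [|n IH] //=.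
by apply: (continuous_comp_within (h := iter n f \o h)) IH _ cf => u /=; exact: iter_in.
Qed.

Lemma preserves_orientation_iter (R : realType) (x y : R -> R) (f : R * R -> R * R) n :
  preserves_orientation x y f -> preserves_orientation x y (iter n f).
Proof. by move=> hf; elim: n => [|n IH] a b c //= /IH; exact: hf. Qed.

Section ArcMaps.
Variable R : realType.
Variables x y : R -> R.
Hypothesis HJ : smooth_jordan_param x y.
Local Notation F := (param x y).
Local Notation G := (curve x y).
Local Notation P := (R * R)%type.

Lemma arcs_preserved_or_swapped (g : P -> P) a b : a < b < a + 1 -> continuous (g \o F) ->
  g @` (G `\` [set F a; F b]) = G `\` [set F a; F b] ->
  (g @` arc x y a b `<=` arc x y a b /\ g @` arc x y b (a + 1) `<=` arc x y b (a + 1)) \/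
  (g @` arc x y a b `<=` arc x y b (a + 1) /\ g @` arc x y b (a + 1) `<=` arc x y a b).
Proof.
move=> /andP[ab ba] cg gO.
have hab : a < b <= a + 1 by apply/andP; split; lra.
have hba : b < a + 1 <= b + 1 by apply/andP; split; lra.
have O_eq := curve_setD_ends HJ hab.
have gA : g @` arc x y a b `<=` G `\` [set F a; F b].
  by rewrite -gO; apply: image_subset; rewrite O_eq; left.
have gC : g @` arc x y b (a + 1) `<=` G `\` [set F b; F (a + 1)].
  by rewrite ends_shift1 // -gO; apply: image_subset; rewrite O_eq; right.
have into_one X : g @` arc x y a b `<=` X -> g @` arc x y b (a + 1) `<=` X ->
    arc x y a b `|` arc x y b (a + 1) `<=` X.
  by move=> hA hC; rewrite -O_eq -gO O_eq image_setU => p [] ?; [exact: hA | exact: hC].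
have Amid : arc x y a b (F ((a + b) / 2)) by exists ((a + b) / 2) => //; apply/andP; split; lra.
have Cmid : arc x y b (a + 1) (F ((b + (a + 1)) / 2)).
  by exists ((b + (a + 1)) / 2) => //; apply/andP; split; lra.
have := arc_image_dichotomy HJ hab cg gA; have := arc_image_dichotomy HJ hba cg gC.
rewrite arc_shift1 // => -[gCC | gCA] [gAA | gAC]; [by left | | | by right]; exfalso.
- by apply: (arc_disjoint HJ hab Amid); apply: (into_one _ gAC gCC); left.
- by apply: (arc_disjoint HJ hab _ Cmid); apply: (into_one _ gAA gCA); right.
Qed.

End ArcMaps.

Section Invariance.
Variable R : realType.
Variables x y : R -> R.
Hypothesis HJ : smooth_jordan_param x y.
Local Notation F := (param x y).
Local Notation G := (curve x y).
Local Notation P := (R * R)%type.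
Variables (alpha beta : P -> P) (m : nat).
Hypothesis alphaG : forall t, G t -> G (alpha t).
Hypothesis betaG : forall t, G t -> G (beta t).
Hypothesis alphaK : forall t, G t -> beta (alpha t) = t.
Hypothesis betaK : forall t, G t -> alpha (beta t) = t.
Hypothesis alpha_cont : {within G, continuous alpha}.
Local Notation am := (iter m alpha).

Lemma iter_curve t : G t -> G (am t). Proof. exact: iter_in. Qed.

Lemma iter_param_continuous : continuous (am \o F).
Proof.
apply: continuous_iter_within alpha_cont;
  [exact: param_continuous | exact: curve_param | exact: alphaG].
Qed.

Lemma iter_inj s t : G s -> G t -> am s = am t -> s = t.
Proof.
move=> Gs Gt e; rewrite -[s](iter_cancel m alphaG alphaK Gs) e.
exact: iter_cancel alphaG alphaK Gt.
Qed.

Lemma iter_setD_fixed E : (forall t, E t -> G t /\ am t = t) ->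
  am @` (G `\` E) = G `\` E.
Proof.
move=> Efix; apply: (image_setD_eq (h := iter m beta)).
- by move=> t; exact: iter_curve.
- by move=> t; exact: iter_in.
- by move=> t; exact: iter_cancel.
- move=> t Gt; split => [Eamt | Et]; last by have [_ ->] := Efix _ Et.
  have [_ e] := Efix _ Eamt.
  by rewrite (iter_inj (iter_curve Gt) Gt e) in Eamt.
Qed.

Lemma alpha_setD_fixed E : (forall t, G t -> am t = t <-> E t) ->
  alpha @` (G `\` E) = G `\` E.
Proof.
move=> fixE; have am_alpha t : am (alpha t) = alpha (am t) by rewrite -iterSr iterS.
apply: (image_setD_eq (h := beta)) => // t Gt.
rewrite -(fixE _ (alphaG Gt)) -(fixE _ Gt) am_alpha; split => [e | -> //].
by rewrite -[am t](alphaK (iter_curve Gt)) e alphaK.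
Qed.

Lemma iter_setD_ends a b : am (F a) = F a -> am (F b) = F b ->
  am @` (G `\` [set F a; F b]) = G `\` [set F a; F b].
Proof.
by move=> fa fb; apply: iter_setD_fixed => t [] ->; split => //; exact: curve_param.
Qed.

Lemma iter_swap_fixed a b : a < b <= a + 1 -> am (F a) = F a -> am (F b) = F b ->
  am @` arc x y a b `<=` arc x y b (a + 1) -> am @` arc x y b (a + 1) `<=` arc x y a b ->
  forall t, G t -> am t = t <-> [set F a; F b] t.
Proof.
move=> hab fa fb swapA swapC t Gt; split => [fixt | [] -> //].
have moved (A C : set P) : am @` A `<=` C -> A t -> C t.
  by move=> amAC At; rewrite -fixt; apply: amAC; exists t.
case: (curve_cases HJ hab Gt) => [-> | -> | At | Ct]; [by left | by right | |].
- by case: (arc_disjoint HJ hab At (moved _ _ swapA At)).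
- by case: (arc_disjoint HJ hab (moved _ _ swapC Ct) Ct).
Qed.

Lemma alpha2_arc_sub a b : a < b < a + 1 ->
  (forall t, G t -> am t = t <-> [set F a; F b] t) ->
  alpha @` (alpha @` arc x y a b) `<=` arc x y a b.
Proof.
move=> hab fixE.
have alphaF_cont : continuous (alpha \o F).
  by apply: continuous_comp_within alpha_cont; [exact: param_continuous | exact: curve_param].
have [[aA _] | [aA aC]] :=
  arcs_preserved_or_swapped HJ hab alphaF_cont (alpha_setD_fixed fixE).
- exact: subset_trans (image_subset alpha aA) aA.
- exact: subset_trans (image_subset alpha aA) aC.
Qed.

Hypothesis shift_order : is_shift_order x y alpha m.

Lemma iter_arc_sub a b : a < b < a + 1 -> am (F a) = F a -> am (F b) = F b ->
  am @` arc x y a b `<=` arc x y a b.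
Proof.
move=> hab fa fb; have /andP[ab ba] := hab.
have hab' : a < b <= a + 1 by apply/andP; split; lra.
have [[] // | [swapA swapC]] :=
  arcs_preserved_or_swapped HJ hab iter_param_continuous (iter_setD_ends fa fb).
pose u := (a + b) / 2.
have Au : arc x y a b (F u) by exists u => //; apply/andP; rewrite /u; split; lra.
have Cu : arc x y b (a + 1) (am (F u)) by apply: swapA; exists (F u).
suff : arc x y a b (am (F u)) by move/(arc_disjoint HJ hab')/(_ Cu).
have [pres | npres] := pselect (preserves_orientation x y alpha).
- apply: (pos_cyclic_arc HJ hab); rewrite -{1}fa -fb.
  apply: preserves_orientation_iter pres _ _ _ _.
  by exists a, u, b; rewrite /u; split; [split; lra |].
- rewrite (shift_order.2 npres) /=.
  apply: (alpha2_arc_sub hab (iter_swap_fixed hab' fa fb swapA swapC)).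
  by exists (alpha (F u)) => //; exists (F u).
Qed.

Lemma iter_arc_invariant a b : a < b <= a + 1 -> am (F a) = F a -> am (F b) = F b ->
  shift_invariant am (arc x y a b).
Proof.
move=> hab fa fb; have /andP[ab ba] := hab.
have := iter_setD_ends fa fb; rewrite curve_setD_ends // /shift_invariant => O_eq.
have [ba' | ab1] := ltP b (a + 1).
- apply: (image_eq_of_partition _ O_eq).
  + by apply/seteqP; split => // p [Ap Cp]; case: (arc_disjoint HJ hab Ap Cp).
  + by apply: iter_arc_sub => //; rewrite ab ba'.
  + by apply: iter_arc_sub; rewrite ?param_periodic //; apply/andP; split; lra.
- have eb : b = a + 1 by apply/eqP; rewrite eq_le ba ab1.
  subst b; have C0 : arc x y (a + 1) (a + 1) = set0.
    by apply/seteqP; split => // p [t /andP[? ?] _]; lra.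
  by rewrite C0 setU0 in O_eq.
Qed.

End Invariance.

Lemma pairwise_disjoint_uniq (R : realType) (l : seq (set (R * R))) : uniq l ->
  (forall A B, A \in l -> B \in l -> A <> B -> A `&` B = set0) -> pairwise_disjoint l.
Proof.
move=> ul disj i j il jl ij; apply: disj; try exact: mem_nth.
by move=> /eqP; rewrite nth_uniq // => /eqP.
Qed.

Section Decomposition.
Variable R : realType.
Variables x y : R -> R.
Hypothesis HJ : smooth_jordan_param x y.
Local Notation F := (param x y).
Local Notation G := (curve x y).
Local Notation P := (R * R)%type.
Variables (alpha beta : P -> P) (m : nat).
Hypothesis alphaG : forall t, G t -> G (alpha t).
Hypothesis betaG : forall t, G t -> G (beta t).
Hypothesis alphaK : forall t, G t -> beta (alpha t) = t.
Hypothesis betaK : forall t, G t -> alpha (beta t) = t.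
Hypothesis alpha_cont : {within G, continuous alpha}.
Hypothesis shift_order : is_shift_order x y alpha m.
Local Notation am := (iter m alpha).
Local Notation Lam := (Lambda G alpha m).
Local Notation Ph := (Phi G alpha m).
Local Notation Y := (Ybd G alpha m).

Lemma Ybd_param u : Y (F u) <-> am (F u) = F u /\ Ph (F u).
Proof.
split; first by case=> -[_ e] hp.
by case=> e hp; split => //; split => //; exact: curve_param.
Qed.

Lemma iter_param_fixed_closed : closed [set u | am (F u) = F u].
Proof.
apply: closed_eqfun; first exact: norm_hausdorff.
- exact: iter_param_continuous.
- exact: param_continuous.
Qed.

Lemma Phi_param_closed : closed (F @^-1` Ph).
Proof.
by apply: preimage_closed; [move=> u _; exact: param_continuous | exact: closed_closure].
Qed.

Lemma Ybd_param_closed : closed (F @^-1` Y).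
Proof.
have -> : F @^-1` Y = [set u | am (F u) = F u] `&` F @^-1` Ph.
  by apply/seteqP; split => u /Ybd_param.
exact: closedI iter_param_fixed_closed Phi_param_closed.
Qed.

Lemma not_Phi_fixed u : ~ Ph (F u) -> am (F u) = F u.
Proof.
move=> nPh; apply: contra_notP nPh => ne; apply: subset_closure; split => //.
exact: curve_param.
Qed.

Lemma arc_classify a b : a < b -> (forall t, a < t < b -> ~ Y (F t)) ->
  arc x y a b `<=` G `\` Ph \/ arc x y a b `<=` Ph `\` Lam.
Proof.
move=> ab Yfree.
have cover u : a < u < b -> am (F u) = F u \/ Ph (F u).
  by move=> _; have [Phu | /not_Phi_fixed] := pselect (Ph (F u)); [right | left].
have disj u : a < u < b -> am (F u) = F u -> Ph (F u) -> False.
  by move=> hu fixu Phu; apply: (Yfree u hu); apply/Ybd_param.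
have [allfix | allPh] :=
  itv_oo_closed_cover ab iter_param_fixed_closed Phi_param_closed cover disj.
- left => _ [u hu <-]; split; first exact: curve_param.
  exact: (disj u hu (allfix u hu)).
- right => _ [u hu <-]; split; first exact: allPh.
  by case=> _ fixu; exact: (disj u hu fixu (allPh u hu)).
Qed.

Lemma tame_arc_partition (Pos : set R) s0 : Y (F s0) ->
  (forall u, limit_point (F @^-1` Y) u -> nbhs u Pos) ->
  exists As : seq (set P),
    [/\ uniq As,
        forall A B, A \in As -> B \in As -> A <> B -> A `&` B = set0,
        G = union_closures As &
        forall A, A \in As -> exists p : R * R, [/\ A = arc x y p.1 p.2, p.1 < p.2 <= p.1 + 1,
          Y (F p.1), Y (F p.2) & tame (F @^-1` Y) Pos p]].
Proof.
move=> Ys0 Pos_nbhs.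
have Ys1 : (F @^-1` Y) (s0 + 1) by rewrite /= param_periodic.
have [L [hL disjL coverL]] :=
  tame_partition_exists Ybd_param_closed Pos_nbhs Ys0 Ys1 ltac:(lra).
pose arcL (p : R * R) := arc x y p.1 p.2.
have arcL_disj p q : p \in L -> q \in L -> p != q -> arcL p `&` arcL q = set0.
  move=> pL qL pq; have [? ? ? _ _] := hL p pL; have [? ? ? _ _] := hL q qL.
  by apply: (arc_window_disjoint HJ (s0 := s0)); first [lra | exact: disjL].
have arcL_mid p : p \in L -> arcL p (F ((p.1 + p.2) / 2)).
  move=> pL; have [? ? ? _ _] := hL p pL.
  by exists ((p.1 + p.2) / 2) => //; apply/andP; split; lra.
have arcL_inj : {in L &, injective arcL}.
  move=> p q pL qL e; apply/eqP; apply: contraT => pq.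
  by have := arcL_disj p q pL qL pq; rewrite e setIid => q0; have := arcL_mid q qL; rewrite q0.
exists (map arcL (undup L)); split.
- by rewrite map_inj_in_uniq ?undup_uniq // => p q; rewrite !mem_undup; exact: arcL_inj.
- move=> _ _ /mapP [p + ->] /mapP [q + ->]; rewrite !mem_undup => pL qL pq.
  by apply: arcL_disj => //; apply/eqP => epq; apply: pq; rewrite epq.
- apply/seteqP; split.
  + apply: (curve_sub_closures HJ (s0 := s0)) => [p | t /coverL [p pL hp]].
      by rewrite mem_undup => /hL [].
    by exists p; rewrite ?mem_undup.
  + by move=> _ [_ /mapP [p _ ->] /(closure_arc_sub HJ) [u _ <-]]; exact: curve_param.
- move=> _ /mapP [p pL ->]; rewrite mem_undup in pL.
  have [? ? ? [? ?] ?] := hL p pL; exists p; split => //; apply/andP; split; lra.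
Qed.

Lemma arc_decomposition (Pos : set R) s0 : Y (F s0) ->
  (forall u, limit_point (F @^-1` Y) u -> nbhs u Pos) ->
  exists ws gs vs : seq (set P),
    [/\ forall w, w \in ws ->
          [/\ w `<=` G `\` Ph, shift_invariant am w & arc_ends_in x y Y w],
        forall g, g \in gs ->
          [/\ g `<=` Ph `\` Lam, shift_invariant am g & arc_ends_in x y Y g],
        forall v, v \in vs -> [/\ v `<=` G, shift_invariant am v, arc_ends_in x y Y v &
          exists a b u, [/\ v = arc x y a b, a < b, a <= u <= b,
            limit_point (F @^-1` Y) u & forall t, a <= t <= b -> Pos t]],
        pairwise_disjoint (ws ++ gs ++ vs) &
        G = union_closures (ws ++ gs ++ vs)].
Proof.
move=> Ys0 Pos_nbhs.
have [As [uAs disjAs covAs hAs]] := tame_arc_partition Ys0 Pos_nbhs.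
have arc_props A : A \in As -> shift_invariant am A /\ arc_ends_in x y Y A.
  move=> /hAs [p [-> /andP[p12 p21] Y1 Y2 _]]; split.
  - apply: (iter_arc_invariant HJ alphaG betaG alphaK betaK alpha_cont shift_order).
    + by apply/andP.
    + by case/Ybd_param: Y1.
    + by case/Ybd_param: Y2.
  - by exists (F p.1), (F p.2); split => //; exists p.1, p.2.
pose inGPh (A : set P) := `[< A `<=` G `\` Ph >].
pose inPhLam (A : set P) := `[< A `<=` Ph `\` Lam >].
pose As' := seq.filter (predC inGPh) As.
exists (seq.filter inGPh As), (seq.filter inPhLam As'), (seq.filter (predC inPhLam) As').
have perm_As : perm_eq (seq.filter inGPh As ++ seq.filter inPhLam As' ++
    seq.filter (predC inPhLam) As') As.
  apply: perm_trans (_ : perm_eq (seq.filter inGPh As ++ As') As); last by rewrite perm_filterC.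
  by rewrite perm_cat2l perm_filterC.
split.
- by move=> w; rewrite mem_filter => /andP[/asboolP ? /arc_props []].
- by move=> g; rewrite !mem_filter => /and3P[/asboolP ? _ /arc_props []].
- move=> v; rewrite !mem_filter => /and3P[/asboolPn nPhLam /asboolPn nGPh vAs].
  have [inv ends] := arc_props v vAs.
  have [p [ev /andP[p12 _] _ _ [Yfree | [Pos_p [u hu lpu]]]]] := hAs v vAs; subst v.
    by case: (arc_classify p12 Yfree).
  by split => //; [exact: arc_sub_curve | exists p.1, p.2, u].
- apply: pairwise_disjoint_uniq; first by rewrite (perm_uniq perm_As).
  by move=> A B; rewrite !(perm_mem perm_As); exact: disjAs.
- rewrite {1}covAs; apply/seteqP; split => t [A hA clA]; exists A => //.
  + by rewrite (perm_mem perm_As).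
  + by rewrite -(perm_mem perm_As).
Qed.

End Decomposition.

Unset Implicit Arguments.

Theorem lemma2p5 (R : realType) (x y : R -> R) (alpha : R * R -> R * R) (m : nat) :
  smooth_jordan_param x y ->
  homeo_on (curve x y) alpha ->
  periodic_points (curve x y) alpha !=set0 ->
  is_shift_order x y alpha m ->
  let G := curve x y in
  let am := iter m alpha in
  let Lam := Lambda G alpha m in
  let Ph := Phi G alpha m in
  let Y := Ybd G alpha m in
  let Y' := limit_point Y in
  (* (a) *)
  (finite_set Y -> Y !=set0 ->
    exists ws gs : seq (set (R * R)),
      [/\ forall w, w \in ws -> [/\ w `<=` G `\` Ph, shift_invariant am w & arc_ends_in x y Y w],
          forall g, g \in gs -> [/\ g `<=` Ph `\` Lam, shift_invariant am g & arc_ends_in x y Y g],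
          pairwise_disjoint (ws ++ gs) &
          G = union_closures (ws ++ gs)]) /\
  (* (b) *)
  (forall f : R * R -> R, {within G, continuous f} ->
    infinite_set Y -> (forall tau, Y' tau -> 0 < f tau) ->
    exists ws gs vs : seq (set (R * R)),
      [/\ forall w, w \in ws -> [/\ w `<=` G `\` Ph, shift_invariant am w & arc_ends_in x y Y w],
          forall g, g \in gs -> [/\ g `<=` Ph `\` Lam, shift_invariant am g & arc_ends_in x y Y g],
          forall v, v \in vs -> [/\ v `<=` G, shift_invariant am v, arc_ends_in x y Y v,
                                   closure v `&` Y' !=set0 &
                                   forall t, closure v t -> 0 < f t],
          pairwise_disjoint (ws ++ gs ++ vs) &
          G = union_closures (ws ++ gs ++ vs)]).
Proof.
move=> HJ [beta [[alphaG betaG alphaK betaK] [alpha_cont _]]] _ shift_order G am Lam Ph Y Y'.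
have decomp := arc_decomposition HJ alphaG betaG alphaK betaK alpha_cont shift_order.
have Y_start : Y !=set0 -> exists s0, Y (param x y s0).
  by move=> [p Yp]; have [s0 _ ps0] := curve_param_window HJ 0 Yp.1.1; exists s0; rewrite ps0.
split.
- move=> finY /Y_start [s0 Ys0].
  have noY' u : ~ limit_point (param x y @^-1` Y) u.
    move=> /(limit_point_param HJ); apply: finite_set_limit_point finY.
    exact/hausdorff_accessible/norm_hausdorff.
  (* Without limit points of [Y] there is no v-arc, so [Pos] is irrelevant. *)
  have [ws [gs [vs [hw hg hv pd cov]]]] :=
    decomp set0 s0 Ys0 (fun u lp => False_ind _ (noY' u lp)).
  have vs0 : vs = [::].
    by case: vs hv {pd cov} => // v vs /(_ v (mem_head _ _)) [_ _ _ [a [b [u [_ _ _ /noY']]]]].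
  by exists ws, gs; rewrite vs0 cats0 in pd cov.
- move=> f f_cont infY f_pos.
  have [s0 Ys0] := Y_start (infinite_setN0 infY).
  have fF_cont : continuous (f \o param x y).
    exact: continuous_comp_within (param_continuous HJ) (curve_param _ _) f_cont.
  have Pos_nbhs u : limit_point (param x y @^-1` Y) u -> nbhs u [set t | 0 < f (param x y t)].
    by move=> /(limit_point_param HJ) /f_pos; exact: (cvgr_gt _ (fF_cont u)).
  have [ws [gs [vs [hw hg hv pd cov]]]] := decomp _ s0 Ys0 Pos_nbhs.
  exists ws, gs, vs; split => // v /hv [vG v_inv v_ends [a [b [u [ev ab hu lpu Pos_ab]]]]].
  split => //; subst v.
  + by exists (param x y u); split; [exact: closure_arc_param | exact: limit_point_param].
  + by move=> _ /(closure_arc_sub HJ) [t ht <-]; exact: Pos_ab.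
Qed.
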